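(* Let $1,2,3,4$ be four distinct vertices of $G$ such that $G[\{1,2,3\}]$ has edge set exactly $\{12,13,23\}$, $G[\{2,3,4\}]$ has edge set exactly $\{23,24,34\}$, and $w_{12}\ge\max\{w_{13},w_{23}\}$ (nothing is assumed about whether $14$ is an edge). If $\Gamma_G$ is population monotonic, then $w_{24}\ge w_{23}+w_{34}$.
   Context: $G=(V,E;w)$ is a finite simple graph with edge weights $w:E\to\mathbb{R}$, $w_e>0$ for all $e\in E$; $w_{ij}$ denotes the weight of edge $ij$. The matching game on $G$ is the cooperative game $\Gamma_G=(N,\gamma)$ with player set $N=V$ and, for $S\subseteq N$, $\gamma(S)$ equal to the maximum weight of a matching in the induced subgraph $G[S]$ (so $\gamma(\emptyset)=0$). A population monotonic allocation scheme (PMAS) is a family $(\boldsymbol{x}_S)_{\emptyset\neq S\subseteq N}$ with $\boldsymbol{x}_S=(x_{S,i})_{i\in S}\in\mathbb{R}^S$ such that (efficiency) $\sum_{i\in S}x_{S,i}=\gamma(S)$ for every nonempty $S\subseteq N$, and (monotonicity) $x_{S,i}\le x_{T,i}$ whenever $\emptyset\ne S\subseteq T\subseteq N$ and $i\in S$. $\Gamma_G$ is called population monotonic if it admits a PMAS. *)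

From mathcomp Require Import all_boot all_order all_algebra.
Set Implicit Arguments. Unset Strict Implicit. Unset Printing Implicit Defensive.
Import Order.TTheory GRing.Theory Num.Theory.
Local Open Scope ring_scope.

Definition simple_graph (T : finType) (e : rel T) : Prop :=
  (forall u v, e u v = e v u) /\ (forall u, ~~ e u u).

Definition edge_weights (T : finType) (R : realFieldType) (e : rel T)
  (w : T -> T -> R) : Prop :=
  (forall u v, w u v = w v u) /\ (forall u v, e u v -> 0 < w u v).

(* A matching of the induced subgraph G[S], represented as a set of oriented
   edges (u,v); distinct members share no endpoint (so each edge occurs in
   at most one orientation). *)
Definition is_matching (T : finType) (e : rel T) (S : {set T})
  (M : {set T * T}) : bool :=
  [forall p in M, [&& e p.1 p.2, p.1 \in S & p.2 \in S]] &&
  [forall p in M, forall q in M,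
     (p != q) ==> [&& p.1 != q.1, p.1 != q.2, p.2 != q.1 & p.2 != q.2]].

Definition matching_weight (T : finType) (R : realFieldType)
  (w : T -> T -> R) (M : {set T * T}) : R :=
  \sum_(p in M) w p.1 p.2.

(* gamma(S) = maximum weight of a matching of G[S]
   (the empty matching has weight 0 and all weights are nonnegative,
   so taking the max with base value 0 is exact). *)
Definition gamma (T : finType) (R : realFieldType) (e : rel T)
  (w : T -> T -> R) (S : {set T}) : R :=
  \big[Order.max/0]_(M : {set T * T} | is_matching e S M) matching_weight w M.

(* Population monotonic allocation scheme: x S i is the payoff of player i
   in coalition S (only meaningful for i \in S, S nonempty). *)
Definition is_PMAS (T : finType) (R : realFieldType) (e : rel T)
  (w : T -> T -> R) (x : {set T} -> T -> R) : Prop :=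
  (forall S : {set T}, S != set0 -> \sum_(i in S) x S i = gamma e w S) /\
  (forall (S U : {set T}) (i : T), S != set0 -> S \subset U -> i \in S ->
     x S i <= x U i).

Definition population_monotonic (T : finType) (R : realFieldType) (e : rel T)
  (w : T -> T -> R) : Prop :=
  exists x : {set T} -> T -> R, is_PMAS e w x.

From mathcomp Require Import all_boot all_order all_algebra.
From mathcomp Require Import lra.
Import Order.TTheory GRing.Theory Num.Theory.
Set Implicit Arguments. Unset Strict Implicit. Unset Printing Implicit Defensive.
Local Open Scope ring_scope.

(* Let x be a PMAS of the matching game and write x_S(i) for
   x S i.  The pair {1,2} earns at least w12; a matching inside a triangle
   has at most one edge and 12 is a heaviest edge of 123, so
   gamma(123) <= w12.  By monotonicity x_123(1) + x_123(2) >= w12, so the third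
   player gets x_123(3) <= 0, hence x_23(3) <= 0 and player 2 must collect the
   whole edge: x_23(2) >= w23.  Monotonicity into the triangle 234 then gives
   gamma(234) >= x_23(2) + x_34(3) + x_34(4) >= w23 + w34.  But gamma(234) is
   the weight of a single edge of 234, and w23 + w34 exceeds both w23 and w34
   (weights are positive), so that edge is 24 and w24 >= w23 + w34. *)

Section SmallCoalitions.
Variables (R : realFieldType) (T : finType) (e : rel T) (w : T -> T -> R).

(* Any single edge inside S is a matching of G[S]. *)
Lemma gamma_ge_edge (S : {set T}) (i j : T) :
  e i j -> i \in S -> j \in S -> w i j <= gamma e w S.
Proof.
move=> eij iS jS.
have matching_ij : is_matching e S [set (i, j)].
  apply/andP; split; apply/forallP => p; apply/implyP; rewrite inE => /eqP ->.
    by rewrite /= eij iS jS.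
  by apply/forallP => q; apply/implyP; rewrite inE => /eqP ->; rewrite eqxx.
have := le_bigmax_cond 0 (matching_weight w) matching_ij.
by rewrite /matching_weight big_set1.
Qed.

(* Two distinct edges of a matching cover four distinct vertices, so a
   matching on at most three vertices has at most one edge. *)
Lemma matching_card_le1 (S : {set T}) (M : {set T * T}) :
  simple_graph e -> (#|S| <= 3)%N -> is_matching e S M -> (#|M| <= 1)%N.
Proof.
move=> [_ irr] cardS /andP[/forallP inS /forallP disj].
have loopless p : p \in M -> p.1 != p.2.
  move=> pM; move: (inS p); rewrite pM /= => /andP[ep _].
  by apply: contraTneq ep => ->; rewrite (negbTE (irr _)).
rewrite leqNgt; apply/negP => /card_gt1P[p [q [pM qM neq_pq]]].
move: (disj p); rewrite pM /= => /forallP/(_ q); rewrite qM neq_pq /=.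
case/and4P => n11 n12 n21 n22.
have uniq4 : uniq [:: p.1; p.2; q.1; q.2].
  by rewrite /= !inE !negb_or loopless // loopless // n11 n12 n21 n22.
have sub4 : {subset [:: p.1; p.2; q.1; q.2] <= S}.
  move: (inS p) (inS q); rewrite pM qM /= => /and3P[_ p1 p2] /and3P[_ q1 q2].
  by move=> v; rewrite !inE => /or4P[] /eqP->.
have := subset_leq_card (introT subsetP sub4).
by rewrite (card_uniqP uniq4) /= => /leq_trans/(_ cardS).
Qed.

Lemma gamma_le_small (S : {set T}) (m : R) :
  simple_graph e -> (#|S| <= 3)%N -> 0 <= m ->
  (forall u v, u \in S -> v \in S -> e u v -> w u v <= m) ->
  gamma e w S <= m.
Proof.
move=> sg cardS m_ge0 wS.
apply: (big_ind (fun y => y <= m)) => // [y z ym zm|M matM].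
  by rewrite ge_max ym zm.
have [->|/set0Pn[p pM]] := eqVneq M set0.
  by rewrite /matching_weight big_set0.
have -> : M = [set p].
  apply/setP => q; rewrite inE.
  exact: (card_le1P (matching_card_le1 sg cardS matM) p pM q).
case/andP: matM => /forallP/(_ p); rewrite pM /= => /and3P[ep p1 p2] _.
by rewrite /matching_weight big_set1 wS.
Qed.

Lemma gamma_triangle_le (a b c : T) (m : R) :
  simple_graph e -> (forall u v, w u v = w v u) -> 0 <= m ->
  w a b <= m -> w a c <= m -> w b c <= m -> gamma e w [set a; b; c] <= m.
Proof.
move=> sg wsym m_ge0 wab wac wbc; apply: gamma_le_small => //.
  have sub3 : {subset [set a; b; c] <= [:: a; b; c]}.
    by move=> v; rewrite !inE -orbA.
  exact: leq_trans (subset_leq_card (introT subsetP sub3)) (card_size _).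
move=> u v; rewrite !inE -!orbA => /or3P[]/eqP-> /or3P[]/eqP->;
  by rewrite ?(negbTE (sg.2 _)) // 1?wsym.
Qed.

End SmallCoalitions.

Lemma uniq3P (T : eqType) (i j k : T) :
  uniq [:: i; j; k] -> [/\ i != j, i != k & j != k].
Proof. by rewrite /= !inE !negb_or andbT => /andP[/andP[-> ->] ->]. Qed.

Section PopulationMonotonicity.
Variables (R : realFieldType) (T : finType) (e : rel T) (w : T -> T -> R).
Variable x : {set T} -> T -> R.
Hypothesis pmas : is_PMAS e w x.

Lemma pmas_pair_sum (i j : T) : i != j ->
  x [set i; j] i + x [set i; j] j = gamma e w [set i; j].
Proof.
move=> nij; rewrite -pmas.1; last by apply/set0Pn; exists i; rewrite !inE eqxx.
by rewrite big_setU1 ?big_set1 // inE.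
Qed.

Lemma pmas_triangle_sum (i j k : T) : uniq [:: i; j; k] ->
  x [set i; j; k] i + x [set i; j; k] j + x [set i; j; k] k =
  gamma e w [set i; j; k].
Proof.
case/uniq3P=> nij nik njk.
rewrite -pmas.1; last by apply/set0Pn; exists i; rewrite !inE eqxx.
rewrite setUC big_setU1 /=; last by rewrite !inE negb_or eq_sym nik eq_sym njk.
by rewrite big_setU1 ?big_set1 ?inE // addrC.
Qed.

Lemma pmas_pair_mono (i j k : T) (S : {set T}) :
  k \in [set i; j] -> i \in S -> j \in S -> x [set i; j] k <= x S k.
Proof.
move=> kij iS jS; apply: pmas.2 => //.
  by apply/set0Pn; exists k.
by apply/subsetP => v; rewrite !inE => /orP[]/eqP->.
Qed.

Lemma pmas_edge_lower (i j : T) : e i j -> i != j ->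
  w i j <= x [set i; j] i + x [set i; j] j.
Proof.
move=> eij nij; rewrite pmas_pair_sum //.
by apply: gamma_ge_edge; rewrite // !inE eqxx ?orbT.
Qed.

(* Key step: if the edge ij alone already attains gamma(ijk), then i and j
   claim all of it inside ijk, leaving k a nonpositive share there and hence
   in the smaller coalition {j,k}. *)
Lemma pmas_heavy_edge (i j k : T) : uniq [:: i; j; k] -> e i j ->
  gamma e w [set i; j; k] <= w i j -> x [set j; k] k <= 0.
Proof.
move=> ijk eij heavy; have [nij _ _] := uniq3P ijk.
have pair_ij := pmas_edge_lower eij nij.
have triangle := pmas_triangle_sum ijk.
have mono_i : x [set i; j] i <= x [set i; j; k] i.
  by apply: pmas_pair_mono; rewrite !inE eqxx ?orbT.
have mono_j : x [set i; j] j <= x [set i; j; k] j.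
  by apply: pmas_pair_mono; rewrite !inE eqxx ?orbT.
have mono_k : x [set j; k] k <= x [set i; j; k] k.
  by apply: pmas_pair_mono; rewrite !inE eqxx ?orbT.
lra.
Qed.

Lemma pmas_edge_to_one (j k : T) : e j k -> j != k ->
  x [set j; k] k <= 0 -> w j k <= x [set j; k] j.
Proof. by move=> ejk njk xk; have := pmas_edge_lower ejk njk; lra. Qed.

Lemma pmas_path_lower (j k l : T) : uniq [:: j; k; l] -> e k l ->
  w j k <= x [set j; k] j -> w j k + w k l <= gamma e w [set j; k; l].
Proof.
move=> jkl ekl share_j; have [_ _ nkl] := uniq3P jkl.
rewrite -pmas_triangle_sum //.
have pair_kl := pmas_edge_lower ekl nkl.
have mono_j : x [set j; k] j <= x [set j; k; l] j.
  by apply: pmas_pair_mono; rewrite !inE eqxx ?orbT.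
have mono_k : x [set k; l] k <= x [set j; k; l] k.
  by apply: pmas_pair_mono; rewrite !inE eqxx ?orbT.
have mono_l : x [set k; l] l <= x [set j; k; l] l.
  by apply: pmas_pair_mono; rewrite !inE eqxx ?orbT.
lra.
Qed.

End PopulationMonotonicity.

Lemma sum_le_max3 (R : realDomainType) (a b c : R) : 0 < a -> 0 < c ->
  a + c <= Num.max a (Num.max b c) -> a + c <= b.
Proof. by move=> a_gt0 c_gt0; rewrite !le_max => /or3P[]; lra. Qed.

Theorem mainTheorem4 (R : realFieldType) (T : finType) (e : rel T)
  (w : T -> T -> R) (v1 v2 v3 v4 : T) :
  simple_graph e -> edge_weights e w ->
  uniq [:: v1; v2; v3; v4] ->
  e v1 v2 -> e v1 v3 -> e v2 v3 -> e v2 v4 -> e v3 v4 ->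
  Num.max (w v1 v3) (w v2 v3) <= w v1 v2 ->
  population_monotonic e w ->
  w v2 v3 + w v3 v4 <= w v2 v4.
Proof.
move=> sg [wsym wpos] uniq1234 e12 e13 e23 e24 e34.
rewrite ge_max => /andP[w13 w23] [x pmas].
have uniq123 : uniq [:: v1; v2; v3] := take_uniq 3 uniq1234.
have uniq234 : uniq [:: v2; v3; v4] by case/andP: uniq1234.
have [n23 _ _] := uniq3P uniq234.
have gamma123 : gamma e w [set v1; v2; v3] <= w v1 v2.
  exact: gamma_triangle_le sg wsym (ltW (wpos _ _ e12)) (lexx _) w13 w23.
have x3_nonpos := pmas_heavy_edge pmas uniq123 e12 gamma123.
have x2_whole := pmas_edge_to_one pmas e23 n23 x3_nonpos.
have lower := pmas_path_lower pmas uniq234 e34 x2_whole.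
set m := Num.max (w v2 v3) (Num.max (w v2 v4) (w v3 v4)).
have upper : gamma e w [set v2; v3; v4] <= m.
  apply: gamma_triangle_le; rewrite ?le_max ?lexx ?orbT //.
  by rewrite ltW ?(wpos _ _ e23).
exact: sum_le_max3 (wpos _ _ e23) (wpos _ _ e34) (le_trans lower upper).
Qed.
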